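(* Let $X$ be a $T_1$ space and $\mathcal{P}$ an ideal of closed subsets of $X$. If the ring $C(X)_\mathcal{P}$ is isomorphic to the ring $C(Y)$ of all real-valued continuous functions on some topological space $Y$, then $C(X)_\mathcal{P}$ is closed under uniform limits, i.e. whenever a sequence $(f_n)$ in $C(X)_\mathcal{P}$ converges uniformly on $X$ to $f\in\mathbb{R}^X$, we have $f\in C(X)_\mathcal{P}$.
   Context: An ideal of closed subsets of $X$ is a family $\mathcal{P}$ of closed subsets of $X$ closed under finite unions and such that every closed subset of a member of $\mathcal{P}$ is in $\mathcal{P}$. For $f\in\mathbb{R}^X$, $D_f$ is the set of points of discontinuity of $f$, and $C(X)_\mathcal{P}=\{f\in\mathbb{R}^X\colon \overline{D_f}\in\mathcal{P}\}$ with pointwise operations. *)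

From HB Require Import structures.
From mathcomp Require Import all_boot all_order all_algebra.
From mathcomp Require Import all_classical all_reals all_analysis.
Set Implicit Arguments. Unset Strict Implicit. Unset Printing Implicit Defensive.
Import Order.TTheory GRing.Theory Num.Theory.
Import numFieldNormedType.Exports.
Local Open Scope classical_set_scope.
Local Open Scope ring_scope.

Definition closed_ideal (X : topologicalType) (P : set (set X)) : Prop :=
  [/\ forall A, P A -> closed A,
      P set0,
      forall A B, P A -> P B -> P (A `|` B) &
      forall A B, P A -> closed B -> B `<=` A -> P B].

Definition discont (X : topologicalType) (R : realType) (f : X -> R) : set X :=
  [set x | ~ {for x, continuous f}].

Definition CP (X : topologicalType) (R : realType) (P : set (set X)) :
  set (X -> R) := [set f | P (closure (discont f))].
Arguments CP {X} R P.

Definition CP_ring_iso_CY (X : topologicalType) (R : realType)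
  (P : set (set X)) (Y : topologicalType) : Prop :=
  exists phi : (X -> R) -> (Y -> R),
    [/\ forall f, CP R P f -> continuous (phi f),
        forall f g, CP R P f -> CP R P g -> phi (f \+ g) = phi f \+ phi g,
        forall f g, CP R P f -> CP R P g -> phi (f \* g) = phi f \* phi g,
        forall f g, CP R P f -> CP R P g -> phi f = phi g -> f = g &
        forall h : Y -> R, continuous h -> exists2 f, CP R P f & phi f = h].

Definition unif_conv (X : Type) (R : realType) (fn : nat -> X -> R) (f : X -> R)
  : Prop :=
  forall e : R, 0 < e -> exists N : nat, forall n : nat, (N <= n)%N ->
    forall x : X, `|fn n x - f x| < e.
Arguments CP_ring_iso_CY {X} R P Y.

From HB Require Import structures.
From mathcomp Require Import all_boot all_order all_algebra.
From mathcomp Require Import all_classical all_reals all_analysis.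
From mathcomp Require Import lra.
Import Order.TTheory GRing.Theory Num.Theory.
Import numFieldNormedType.Exports.
Local Open Scope classical_set_scope.
Local Open Scope ring_scope.

(* A ring isomorphism phi : C(X)_P -> C(Y) fixes the constants 1/(k+1).  In both
   rings the nonnegative functions are exactly the squares (C(X)_P is closed under
   composition with sqrt), so phi and its inverse preserve the pointwise order, and
   hence sup |f - g| <= 1/(k+1) iff sup |phi f - phi g| <= 1/(k+1).  Thus phi maps a
   sequence of C(X)_P converging uniformly to f to a uniformly Cauchy sequence of
   C(Y); its uniform limit is continuous, hence equal to phi g for some g in C(X)_P,
   and pulling back the uniform convergence gives f = g. *)

Section UniformConvergence.
Context {R : realType}.

Definition unif_cauchy {T : Type} (u : nat -> T -> R) : Prop :=
  forall e : R, 0 < e -> exists N : nat, forall n m : nat, (N <= n)%N -> (N <= m)%N ->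
    forall t : T, `|u n t - u m t| <= e.

Lemma unif_conv_cauchy {T : Type} {u : nat -> T -> R} {f : T -> R} :
  unif_conv u f -> unif_cauchy u.
Proof.
move=> uf e e0; have [N uN] := uf (e / 2) (divr_gt0 e0 (ltr0Sn _ 1)).
exists N => n m Nn Nm t; have := uN n Nn t; have := uN m Nm t.
rewrite (distrC (u m t)) => ? ?.
by apply: le_trans (ler_distD (f t) _ _) _; lra.
Qed.

Lemma unif_conv_pointwise {T : Type} {u : nat -> T -> R} {f : T -> R} (t : T) :
  unif_conv u f -> u ^~ t @ \oo --> f t.
Proof.
move=> uf; apply/cvgrPdist_lt => e /uf[N uN]; near=> n.
by rewrite distrC; apply: uN; near: n; exists N.
Unshelve. all: by end_near. Qed.

Lemma unif_conv_unique {T : Type} {u : nat -> T -> R} {f g : T -> R} :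
  unif_conv u f -> unif_conv u g -> f = g.
Proof.
move=> uf ug; apply/funext => t.
exact: cvg_unique (unif_conv_pointwise t uf) (unif_conv_pointwise t ug).
Qed.

Lemma unif_cauchy_conv {T : Type} {u : nat -> T -> R} :
  unif_cauchy u -> unif_conv u (fun t => lim (u ^~ t @ \oo)).
Proof.
move=> uc e e0; have [N uN] := uc (e / 2) (divr_gt0 e0 (ltr0Sn _ 1)).
exists N => n Nn t.
have ut : cvg (u ^~ t @ \oo).
  apply: cauchy_cvg; apply: cauchy_exP => d d0.
  have [M uM] := uc (d / 2) (divr_gt0 d0 (ltr0Sn _ 1)).
  exists (u M t); exists M => // m /= Mm; rewrite -ball_normE /=.
  have := uM M m (leqnn M) Mm t; lra.
have : closed_ball (u n t) (e / 2) (lim (u ^~ t @ \oo)).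
  apply: (closed_cvg _ (@closed_ball_closed R R (u n t) (e / 2)) _ _ ut).
  near=> m; rewrite closed_ballE ?divr_gt0 //; apply: uN => //.
  by near: m; exists N.
rewrite closed_ballE ?divr_gt0 // /closed_ball_ /= => ?; lra.
Unshelve. all: by end_near. Qed.

Lemma unif_conv_uniform {T : choiceType} {u : nat -> T -> R} {f : T -> R} :
  unif_conv u f -> {uniform, u @ \oo --> f}.
Proof.
move=> uf P /uniform_nbhs[E [+ sEP]]; rewrite -entourage_ballE => -[e /= e0 sE].
have [N uN] := uf e e0; exists N => // n /uN un; apply: sEP => t _; apply: sE.
by rewrite /= -ball_normE /= distrC.
Qed.

Lemma unif_conv_continuous {T : topologicalType} {u : nat -> T -> R} {f : T -> R} :
  (forall n, continuous (u n)) -> unif_conv u f -> continuous f.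
Proof.
move=> uc /unif_conv_uniform; apply: uniform_limit_continuous.
by exists 0%N => // n _; exact: uc.
Qed.

End UniformConvergence.

Section DiscontinuityIdeal.
Context {R : realType} {X : topologicalType} {P : set (set X)}.
Hypothesis P_ideal : closed_ideal P.

Lemma CP_discont_subU {f g h : X -> R} : CP R P f -> CP R P g ->
  discont h `<=` discont f `|` discont g -> CP R P h.
Proof.
case: P_ideal => _ _ PU Psub Pf Pg hfg.
apply: (Psub _ _ (PU _ _ Pf Pg)); first exact: closed_closure.
by rewrite -closureU; apply: closureS.
Qed.

Lemma CP_cst (c : R) : CP R P (fun=> c).
Proof.
case: P_ideal => _ P0 _ Psub; apply: (Psub _ _ P0); first exact: closed_closure.
suff -> : discont (fun _ : X => c) = set0 by rewrite closure0.
by apply/seteqP; split=> // x []; exact: cst_continuous.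
Qed.

Lemma CP_add {f g : X -> R} : CP R P f -> CP R P g -> CP R P (f \+ g).
Proof.
move=> Pf Pg; apply: (CP_discont_subU Pf Pg) => x fgx.
by apply/not_andP => -[fx gx]; apply: fgx; exact: continuousD.
Qed.

Lemma CP_mul {f g : X -> R} : CP R P f -> CP R P g -> CP R P (f \* g).
Proof.
move=> Pf Pg; apply: (CP_discont_subU Pf Pg) => x fgx.
by apply/not_andP => -[fx gx]; apply: fgx; exact: continuousM.
Qed.

Lemma CP_comp {h : R -> R} {f : X -> R} :
  continuous h -> CP R P f -> CP R P (h \o f).
Proof.
move=> hc Pf; apply: (CP_discont_subU Pf Pf) => x hfx; left => fx.
by apply: hfx; apply: continuous_comp fx (hc _).
Qed.

Lemma CP_opp {f : X -> R} : CP R P f -> CP R P (fun x => - f x).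
Proof. exact/CP_comp/opp_continuous. Qed.

Lemma CP_sub {f g : X -> R} : CP R P f -> CP R P g -> CP R P (fun x => f x - g x).
Proof. by move=> Pf /CP_opp; exact: CP_add. Qed.

End DiscontinuityIdeal.

Section RingIsomorphism.
Context {R : realType} {X : topologicalType} {P : set (set X)} {Y : topologicalType}.
Hypothesis P_ideal : closed_ideal P.

(* [CP_ring_iso_CY R P Y] unfolds to [exists phi, CP_ring_iso phi]. *)
Definition CP_ring_iso (phi : (X -> R) -> (Y -> R)) : Prop :=
  [/\ forall f, CP R P f -> continuous (phi f),
      forall f g, CP R P f -> CP R P g -> phi (f \+ g) = phi f \+ phi g,
      forall f g, CP R P f -> CP R P g -> phi (f \* g) = phi f \* phi g,
      forall f g, CP R P f -> CP R P g -> phi f = phi g -> f = g &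
      forall h : Y -> R, continuous h -> exists2 f, CP R P f & phi f = h].

Context {phi : (X -> R) -> (Y -> R)}.
Hypothesis phi_iso : CP_ring_iso phi.

Let phi_cont {f : X -> R} : CP R P f -> continuous (phi f).
Proof. by case: phi_iso => + _ _ _ _; apply. Qed.

Let phiD {f g : X -> R} : CP R P f -> CP R P g -> phi (f \+ g) = phi f \+ phi g.
Proof. by case: phi_iso => _ + _ _ _; apply. Qed.

Let phiM {f g : X -> R} : CP R P f -> CP R P g -> phi (f \* g) = phi f \* phi g.
Proof. by case: phi_iso => _ _ + _ _; apply. Qed.

Let phi_inj {f g : X -> R} : CP R P f -> CP R P g -> phi f = phi g -> f = g.
Proof. by case: phi_iso => _ _ _ + _; apply. Qed.

Let phi_surj {h : Y -> R} : continuous h -> exists2 f, CP R P f & phi f = h.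
Proof. by case: phi_iso => _ _ _ _; apply. Qed.

Let CPc := @CP_cst R _ _ P_ideal.

Let phi_cstD (a b : R) : phi (fun=> a + b) = phi (fun=> a) \+ phi (fun=> b).
Proof. exact: phiD (CPc a) (CPc b). Qed.

Let phi_cstM (a b : R) : phi (fun=> a * b) = phi (fun=> a) \* phi (fun=> b).
Proof. exact: phiM (CPc a) (CPc b). Qed.

Lemma phi_cst0 : phi (fun=> 0) = fun=> 0.
Proof.
apply/funext => y; have /(congr1 (@^~ y)) /= := phi_cstD 0 0.
by rewrite addr0 => ?; lra.
Qed.

Lemma phi_cst1 : phi (fun=> 1) = fun=> 1.
Proof.
have [u Pu phiu] := phi_surj (@cst_continuous Y R 1).
apply/funext => y; have /(congr1 (@^~ y)) /= := phiM (CPc 1) Pu.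
rewrite [_ \* u](_ : _ = u) ?phiu ?mulr1 //.
by apply/funext => x /=; rewrite mul1r.
Qed.

Lemma phi_cst_nat (n : nat) : phi (fun=> n%:R) = fun=> n%:R.
Proof.
elim: n => [|n IHn]; first exact: phi_cst0.
by rewrite -natr1 phi_cstD IHn phi_cst1.
Qed.

Lemma phi_cstV (c : R) : phi (fun=> c) = (fun=> c) -> phi (fun=> c^-1) = fun=> c^-1.
Proof.
have [->|c0] := eqVneq c 0; first by rewrite invr0.
move=> phic; apply/funext => y; have /(congr1 (@^~ y)) /= := phi_cstM c c^-1.
rewrite divff // phi_cst1 phic => E.
by rewrite -[LHS](mulKf c0) -E mulr1.
Qed.

Lemma phi_opp {f : X -> R} : CP R P f -> phi (fun x => - f x) = fun y => - phi f y.
Proof.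
move=> Pf; apply/funext => y.
have /(congr1 (@^~ y)) /= := phiD Pf (CP_opp P_ideal Pf).
have -> : f \+ (fun x => - f x) = fun=> 0 by apply/funext => x /=; rewrite subrr.
by rewrite phi_cst0 /= => ?; lra.
Qed.

Lemma phi_sub {f g : X -> R} : CP R P f -> CP R P g ->
  phi (fun x => f x - g x) = fun y => phi f y - phi g y.
Proof. by move=> Pf Pg; have := phiD Pf (CP_opp P_ideal Pg); rewrite phi_opp. Qed.

Lemma phi_ge0P {g : X -> R} : CP R P g ->
  (forall x, 0 <= g x) <-> (forall y, 0 <= phi g y).
Proof.
move=> Pg; split=> [g0 y | phig0 x].
- have Ps : CP R P (Num.sqrt \o g) := CP_comp P_ideal (@sqrt_continuous R) Pg.
  have -> : g = (Num.sqrt \o g) \* (Num.sqrt \o g).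
    by apply/funext => x /=; rewrite -expr2 sqr_sqrtr.
  by rewrite phiM //= -expr2 sqr_ge0.
- have [s Ps phis] : exists2 s, CP R P s & phi s = Num.sqrt \o phi g.
    apply: phi_surj => y.
    by apply: continuous_comp; [exact: phi_cont | exact: sqrt_continuous].
  suff -> : g = s \* s by rewrite /= -expr2 sqr_ge0.
  apply: phi_inj => //; first exact: CP_mul.
  by rewrite phiM // phis; apply/funext => y /=; rewrite -expr2 sqr_sqrtr.
Qed.

Lemma phi_dist_le {f g : X -> R} {c : R} : CP R P f -> CP R P g ->
  phi (fun=> c) = (fun=> c) ->
  (forall x, `|f x - g x| <= c) <-> (forall y, `|phi f y - phi g y| <= c).
Proof.
move=> Pf Pg phic.
have ge0_sub a b : CP R P a -> CP R P b ->
    (forall x, 0 <= c - (a x - b x)) <-> (forall y, 0 <= c - (phi a y - phi b y)).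
  move=> Pa Pb; have Pab := CP_sub P_ideal Pa Pb.
  have := phi_ge0P (CP_sub P_ideal (CPc c) Pab).
  by rewrite (phi_sub (CPc c) Pab) (phi_sub Pa Pb) phic.
have normP a b : `|a - b| <= c <-> 0 <= c - (a - b) /\ 0 <= c - (b - a).
  by rewrite ler_norml; split=> [/andP[] | []] ? ?; [split | apply/andP; split]; lra.
split=> fgc z; apply/normP; split; [
  apply: (ge0_sub f g Pf Pg).1 | apply: (ge0_sub g f Pg Pf).1 |
  apply: (ge0_sub f g Pf Pg).2 | apply: (ge0_sub g f Pg Pf).2] => t;
  by have /normP[] := fgc t.
Qed.

Lemma phi_cst_small (e : R) : 0 < e ->
  exists c, [/\ 0 < c, c < e & phi (fun=> c) = fun=> c].
Proof.
move=> e0; have [k _ /(_ k (leqnn k)) ke] := near_infty_natSinv_lt (PosNum e0).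
by exists k.+1%:R^-1; split=> //; exact/phi_cstV/phi_cst_nat.
Qed.

Lemma phi_unif_cauchy {u : nat -> X -> R} : (forall n, CP R P (u n)) ->
  unif_cauchy u -> unif_cauchy (fun n => phi (u n)).
Proof.
move=> Pu uc e /phi_cst_small[c [c0 ce phic]].
have [N uN] := uc c c0; exists N => n m Nn Nm y.
apply: le_trans (ltW ce); move: y.
by apply/(phi_dist_le (Pu n) (Pu m) phic); exact: uN.
Qed.

Lemma phi_unif_conv_inv {u : nat -> X -> R} {g : X -> R} :
  (forall n, CP R P (u n)) -> CP R P g ->
  unif_conv (fun n => phi (u n)) (phi g) -> unif_conv u g.
Proof.
move=> Pu Pg ug e /phi_cst_small[c [c0 ce phic]].
have [N uN] := ug c c0; exists N => n Nn x.
apply: le_lt_trans ce; move: x.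
by apply/(phi_dist_le (Pu n) Pg phic) => y; exact/ltW/uN.
Qed.

End RingIsomorphism.

Theorem theorem3p3 (R : realType) (X : topologicalType) (P : set (set X)) :
  accessible_space X -> closed_ideal P ->
  (exists Y : topologicalType, CP_ring_iso_CY R P Y) ->
  forall (fn : nat -> X -> R) (f : X -> R),
    (forall n, CP R P (fn n)) -> unif_conv fn f -> CP R P f.
Proof.
move=> _ P_ideal [Y [phi phi_iso]] fn f Pfn fnf.
have [phi_cont _ _ _ phi_surj] := phi_iso.
have phifn_cauchy := phi_unif_cauchy P_ideal phi_iso Pfn (unif_conv_cauchy fnf).
have phifn_conv := unif_cauchy_conv phifn_cauchy.
have phifn_cont n : continuous (phi (fn n)) := phi_cont _ (Pfn n).
have [g Pg phig] := phi_surj _ (unif_conv_continuous phifn_cont phifn_conv).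
have fng : unif_conv fn g.
  by apply: (phi_unif_conv_inv P_ideal phi_iso Pfn Pg); rewrite phig.
by rewrite (unif_conv_unique fnf fng).
Qed.
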